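(* For every probability vector $p=(p_1,\dots,p_I)\in\mathbb R^I$ with all entries positive, the system-wide safety staffing parameter $\vartheta_p$ is given, for every $i\in\mathcal I$, by $$\vartheta_p=\frac{\sum_{j\in\mathcal J}\mathfrak d(i,j)\,\theta_j-\sum_{\ell\in\mathcal I}\mathfrak d(i,\ell)\,\hat\lambda_\ell}{\sum_{\ell\in\mathcal I}\mathfrak d(i,\ell)\,p_\ell}.$$ (In particular the right-hand side does not depend on $i$.)
   Context: Network and parameters: $\mathcal I=\{1,\dots,I\}$ (customer classes), $\mathcal J=\{1,\dots,J\}$ (server pools), and $\mathcal E\subset\mathcal I\times\mathcal J$ is a set of edges such that the bipartite graph $\mathcal G=(\mathcal I\cup\mathcal J,\mathcal E)$ is a tree. Write $i\sim j$ iff $(i,j)\in\mathcal E$, $\mathcal J(i)=\{j:i\sim j\}$, $\mathcal I(j)=\{i:i\sim j\}$. $\mathbb R^{\mathcal G}$ denotes the arrays $[\xi_{ij}]\in\mathbb R^{I\times J}$ with $\xi_{ij}=0$ whenever $i\not\sim j$, and $\mathbb R^{\mathcal G}_+$ its elements with nonnegative entries. For each $n\in\mathbb N$ there are arrival rates $\lambda^n_i>0$, service rates $\mu^n_{ij}>0$ ($i\sim j$) and pool sizes $N^n_j\in\mathbb N$, such that as $n\to\infty$: $\lambda^n_i/n\to\lambda_i>0$, $N^n_j/n\to\nu_j>0$, $\mu^n_{ij}\to\mu_{ij}>0$, $\hat\lambda^n_i:=(\lambda^n_i-n\lambda_i)/\sqrt n\to\hat\lambda_i\in\mathbb R$, $\hat\mu^n_{ij}:=\sqrt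 n(\mu^n_{ij}-\mu_{ij})\to\hat\mu_{ij}\in\mathbb R$, $\hat\nu^n_j:=\sqrt n(N^n_j/n-\nu_j)\to\hat\nu_j\in\mathbb R$. Complete resource pooling is assumed: the linear program ''minimize $\max_{j}\sum_i\xi_{ij}$ over $\xi\in\mathbb R^{\mathcal G}_+$ subject to $\sum_j\mu_{ij}\nu_j\xi_{ij}=\lambda_i$ for all $i$'' has a unique solution $\xi^*$, and it satisfies $\sum_{i}\xi^*_{ij}=1$ for all $j$ and $\xi^*_{ij}>0$ for all $i\sim j$. Put $z^*_{ij}:=\xi^*_{ij}\nu_j$ and $\theta_j:=\hat\nu_j+\sum_{i\in\mathcal I(j)}(\hat\mu_{ij}/\mu_{ij})z^*_{ij}$. SWSS parameter: for a probability vector $p\in\mathbb R^I$ with positive entries, $\vartheta_p$ is the (unique) optimal value of the linear program: maximize $\vartheta$ over $(\vartheta,\kappa)\in\mathbb R\times\mathbb R^{\mathcal G}$ subject to $\hat\lambda_i\le\sum_{j\in\mathcal J(i)}\mu_{ij}\kappa_{ij}-\vartheta p_i$ for all $i\in\mathcal I$ and $\sum_{i\in\mathcal I(j)}\kappa_{ij}=\theta_j$ for all $j\in\mathcal J$. Gains: for $i\in\mathcal I$, $j\in\mathcal J$, let $(i_1,j_1,i_2,j_2,\dots,i_m,j_m)$ be the unique shortest path in $\mathcal G$ from $i=i_1$ to $j=j_m$, and set $\mathfrak d(i,j):=\mu_{i_1j_1}\prod_{k=1}^{m-1}\mu_{i_{k+1}j_{k+1}}/\mu_{i_{k+1}j_k}$.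 For $i\ne i'$ in $\mathcal I$ with shortest path $(i_1,j_1,\dots,j_{m-1},i_m)$ from $i=i_1$ to $i'=i_m$, set $\mathfrak d(i,i'):=\prod_{k=1}^{m-1}\mu_{i_kj_k}/\mu_{i_{k+1}j_k}$; and $\mathfrak d(i,i):=1$. *)

From HB Require Import structures.
From mathcomp Require Import all_boot all_order all_algebra.
From mathcomp Require Import reals.
From Stdlib Require Import ClassicalEpsilon.
Set Implicit Arguments. Unset Strict Implicit. Unset Printing Implicit Defensive.
Import Order.TTheory GRing.Theory Num.Theory.
Local Open Scope ring_scope.

Section Defs.
Variables (R : realType) (I J : nat).
Variable E : 'I_I -> 'I_J -> bool.

Definition vertex := ('I_I + 'I_J)%type.

Definition adj : rel vertex := fun u v =>
  match u, v with
  | inl i, inr j => E i j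
  | inr j, inl i => E i j
  | _, _ => false
  end.

Definition is_tree : Prop :=
  (forall u v : vertex, connect adj u v) /\
  #|[set e : 'I_I * 'I_J | E e.1 e.2]| = (I + J).-1%N.

Definition in_RG (x : 'I_I -> 'I_J -> R) : Prop :=
  forall i j, ~~ E i j -> x i j = 0.

Variables (mu : 'I_I -> 'I_J -> R) (nu : 'I_J -> R) (lam : 'I_I -> R).

Definition crp_feasible (xi : 'I_I -> 'I_J -> R) : Prop :=
  in_RG xi /\ (forall i j, 0 <= xi i j) /\
  (forall i, \sum_(j < J) mu i j * nu j * xi i j = lam i).

Definition crp_objective (xi : 'I_I -> 'I_J -> R) : R :=
  \big[Num.max/0]_(j < J) \sum_(i < I) xi i j.

Definition crp_optimal (xi : 'I_I -> 'I_J -> R) : Prop :=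
  crp_feasible xi /\
  forall xi', crp_feasible xi' -> crp_objective xi <= crp_objective xi'.

Definition CRP (xi_star : 'I_I -> 'I_J -> R) : Prop :=
  crp_optimal xi_star /\
  (forall xi, crp_optimal xi -> forall i j, xi i j = xi_star i j) /\
  (forall j, \sum_(i < I) xi_star i j = 1) /\
  (forall i j, E i j -> 0 < xi_star i j).

Variables (lamhat : 'I_I -> R) (muhat : 'I_I -> 'I_J -> R) (nuhat : 'I_J -> R).

Definition theta (xi_star : 'I_I -> 'I_J -> R) (j : 'I_J) : R :=
  nuhat j + \sum_(i < I | E i j) (muhat i j / mu i j) * (xi_star i j * nu j).

Definition swss_feasible (xi_star : 'I_I -> 'I_J -> R) (p : 'I_I -> R)
    (v : R) (kappa : 'I_I -> 'I_J -> R) : Prop :=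
  in_RG kappa /\
  (forall i, lamhat i <= \sum_(j < J | E i j) mu i j * kappa i j - v * p i) /\
  (forall j, \sum_(i < I | E i j) kappa i j = theta xi_star j).

(* v is the optimal value of the SWSS LP (i.e. v = vartheta_p) *)
Definition is_swss_value (xi_star : 'I_I -> 'I_J -> R) (p : 'I_I -> R)
    (v : R) : Prop :=
  (exists kappa, swss_feasible xi_star p v kappa) /\
  (forall v' kappa, swss_feasible xi_star p v' kappa -> v' <= v).

(* A path i = i_1, j_1, i_2, j_2, ..., i_m, j_m = j is encoded as
   (j_1, [:: (i_2, j_2); ...; (i_m, j_m)]); its length parameter is m-1. *)
Fixpoint walkIJ (cur : 'I_J) (t : seq ('I_I * 'I_J)) (target : 'I_J) : bool :=
  match t with
  | [::] => cur == target
  | (i2, j2) :: t' => [&& E i2 cur, E i2 j2 & walkIJ j2 t' target]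
  end.

Definition pathIJ (i : 'I_I) (j : 'I_J) (pt : 'I_J * seq ('I_I * 'I_J)) : bool :=
  E i pt.1 && walkIJ pt.1 pt.2 j.

Definition shortest_pathIJ i j (pt : 'I_J * seq ('I_I * 'I_J)) : Prop :=
  pathIJ i j pt /\ forall pt', pathIJ i j pt' -> (size pt.2 <= size pt'.2)%N.

Fixpoint gain_tailIJ (cur : 'I_J) (t : seq ('I_I * 'I_J)) : R :=
  match t with
  | [::] => 1
  | (i2, j2) :: t' => mu i2 j2 / mu i2 cur * gain_tailIJ j2 t'
  end.

Definition gainIJ (i : 'I_I) (pt : 'I_J * seq ('I_I * 'I_J)) : R :=
  mu i pt.1 * gain_tailIJ pt.1 pt.2.

(* d(i,j), computed along the (unique) shortest path from i to j *)
Definition dIJ (i : 'I_I) (j : 'I_J) : R :=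
  gainIJ i (epsilon (inhabits (j, [::])) (shortest_pathIJ i j)).

(* A path i = i_1, j_1, i_2, ..., j_{m-1}, i_m = i' is encoded as
   [:: (j_1, i_2); ...; (j_{m-1}, i_m)]. *)
Fixpoint walkII (cur : 'I_I) (t : seq ('I_J * 'I_I)) (target : 'I_I) : bool :=
  match t with
  | [::] => cur == target
  | (j, i2) :: t' => [&& E cur j, E i2 j & walkII i2 t' target]
  end.

Definition shortest_pathII i i' (t : seq ('I_J * 'I_I)) : Prop :=
  walkII i t i' /\ forall t', walkII i t' i' -> (size t <= size t')%N.

Fixpoint gainII (cur : 'I_I) (t : seq ('I_J * 'I_I)) : R :=
  match t with
  | [::] => 1
  | (j, i2) :: t' => mu cur j / mu i2 j * gainII i2 t'
  end.

Definition dII (i i' : 'I_I) : R :=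
  if i == i' then 1
  else gainII i (epsilon (inhabits [::]) (shortest_pathII i i')).

End Defs.

(* Call (w, c) a positive potential of the network if w_l > 0, c_j > 0 and
   w_l * mu_lj = c_j on every edge l ~ j.  Along any path the gains
   telescope, so d(i,j) = c_j / w_i and d(i,l) = w_l / w_i.  Multiplying the
   class constraints of the SWSS program by w_l and summing, the pool
   constraints turn the left-hand side into sum_j c_j theta_j; this bounds
   every feasible value by
       (sum_j c_j theta_j - sum_l w_l lamhat_l) / (sum_l w_l p_l).
   On a tree the incidence matrix (one row per edge) has rank I + J - 1:
   this yields a positive potential (the left kernel of its transpose is a
   line) and shows that every target balanced against (w, c) is the vector
   of class and pool sums of some array kappa; the bound is thus attained. *)

From mathcomp Require Import all_boot all_order all_algebra.
From mathcomp Require Import reals.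
From mathcomp Require Import zify ring lra.
From Stdlib Require Import ClassicalEpsilon.
Set Implicit Arguments. Unset Strict Implicit. Unset Printing Implicit Defensive.
Import Order.TTheory GRing.Theory Num.Theory.
Local Open Scope ring_scope.

Lemma ex_minimal (T : Type) (P : T -> Prop) (size_of : T -> nat) :
  (exists x, P x) ->
  exists x, P x /\ forall y, P y -> (size_of x <= size_of y)%N.
Proof.
move=> [x Px].
suff min_below n : forall x, (size_of x <= n)%N -> P x ->
    exists x, P x /\ forall y, P y -> (size_of x <= size_of y)%N.
  exact: (min_below _ x (leqnn _) Px).
elim: n => [|n IHn] x0 x0_small Px0.
  by exists x0; split=> // y _; move: x0_small; rewrite leqn0 => /eqP ->.
case: (classic (exists y, P y /\ (size_of y < size_of x0)%N)) => [[y [Py lt_y]]|no_smaller].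
  by apply: (IHn y) => //; lia.
exists x0; split=> // y Py; rewrite leqNgt; apply/negP => lt_y.
by apply: no_smaller; exists y.
Qed.

Lemma sum_if_eq (R : nmodType) (T : finType) (a : T) (F : T -> R) :
  \sum_(x : T) (if a == x then F x else 0) = F a.
Proof. by rewrite -big_mkcond /= (big_pred1 a) // => x; rewrite eq_sym. Qed.

Section Walks.
Variables (I J : nat) (E : 'I_I -> 'I_J -> bool).

Lemma connect_ind (P : vertex I J -> Prop) :
  (forall u v, adj E u v -> P u -> P v) ->
  forall u v, connect (adj E) u v -> P u -> P v.
Proof.
move=> P_adj u v /connectP [s path_s ->].
elim: s u path_s => [|x s IHs] u //= /andP [adj_ux path_s] Pu.
exact: (IHs x path_s (P_adj _ _ adj_ux Pu)).
Qed.

Lemma walkII_rcons t cur l j l' :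
  walkII E cur t l -> E l j -> E l' j -> walkII E cur (rcons t (j, l')) l'.
Proof.
elim: t cur => [|[j1 i2] t IHt] cur /=; first by move=> /eqP -> -> ->; rewrite eqxx.
by move=> /and3P [-> -> walk_t] E_lj E_l'j; apply: IHt.
Qed.

Lemma walkII_pathIJ t cur l j :
  walkII E cur t l -> E l j -> exists pt, pathIJ E cur j pt.
Proof.
elim: t cur => [|[j1 i2] t IHt] cur /=.
  by move=> /eqP -> E_lj; exists (j, [::]); rewrite /pathIJ /= E_lj eqxx.
move=> /and3P [E_cur E_i2 walk_t] E_lj.
have [[j0 t0] /andP [/= E_i2j0 walk_t0]] := IHt _ walk_t E_lj.
by exists (j1, (i2, j0) :: t0); rewrite /pathIJ /= E_cur E_i2 E_i2j0 walk_t0.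
Qed.

Hypothesis connected : forall u v, connect (adj E) u v.

Lemma walks_from i :
  (forall l, exists t, walkII E i t l) /\ (forall j, exists pt, pathIJ E i j pt).
Proof.
pose reached (v : vertex I J) := match v with
  | inl l => exists t, walkII E i t l
  | inr j => exists t l, walkII E i t l /\ E l j end.
have reach v : reached v.
  apply: (connect_ind (P := reached) _ (connected (inl i) v)); last first.
    by exists [::]; rewrite /= eqxx.
  case=> [l|j] [l'|j'] //= E_v; first by move=> [t walk_t]; exists t, l.
  move=> [t [l [walk_t E_lj]]]; exists (rcons t (j, l')).
  exact: walkII_rcons walk_t E_lj E_v.
split=> [l|j]; first exact: (reach (inl l)).
by have [t [l [walk_t E_lj]]] := reach (inr j); apply: walkII_pathIJ walk_t E_lj.
Qed.

End Walks.

Definition positive_potential (R : realType) (I J : nat)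
    (E : 'I_I -> 'I_J -> bool) (mu : 'I_I -> 'I_J -> R)
    (w : 'I_I -> R) (c : 'I_J -> R) : Prop :=
  [/\ forall l, 0 < w l, forall j, 0 < c j & forall l j, E l j -> w l * mu l j = c j].

Section Gains.
Variables (R : realType) (I J : nat) (E : 'I_I -> 'I_J -> bool).
Variables (mu : 'I_I -> 'I_J -> R) (w : 'I_I -> R) (c : 'I_J -> R).
Hypothesis potential : positive_potential E mu w c.

Let w_neq0 l : w l != 0. Proof. by case: potential => wpos _ _; rewrite gt_eqF. Qed.
Let c_neq0 j : c j != 0. Proof. by case: potential => _ cpos _; rewrite gt_eqF. Qed.

Lemma mu_ratio l j : E l j -> mu l j = c j / w l.
Proof.
by case: potential => _ _ wmu /wmu <-; field; rewrite w_neq0.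
Qed.

(* Along any walk the gains telescope into ratios of potentials. *)
Lemma gain_tailIJ_ratio t cur j :
  walkIJ E cur t j -> gain_tailIJ mu cur t = c j / c cur.
Proof.
elim: t cur => [|[i2 j2] t IHt] cur /=; first by move=> /eqP ->; rewrite divff.
move=> /and3P [E_cur E_j2 walk_t]; rewrite (IHt _ walk_t) (mu_ratio E_cur) (mu_ratio E_j2).
by field; rewrite !w_neq0 !c_neq0.
Qed.

Lemma gainIJ_ratio i j pt : pathIJ E i j pt -> gainIJ mu i pt = c j / w i.
Proof.
case: pt => j1 t /andP [/= E_ij1 walk_t].
rewrite /gainIJ /= (gain_tailIJ_ratio walk_t) (mu_ratio E_ij1).
by field; rewrite w_neq0 c_neq0.
Qed.

Lemma gainII_ratio t cur l : walkII E cur t l -> gainII mu cur t = w l / w cur.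
Proof.
elim: t cur => [|[j i2] t IHt] cur /=; first by move=> /eqP ->; rewrite divff.
move=> /and3P [E_cur E_i2 walk_t]; rewrite (IHt _ walk_t) (mu_ratio E_cur) (mu_ratio E_i2).
by field; rewrite !w_neq0 c_neq0.
Qed.

Hypothesis connected : forall u v, connect (adj E) u v.

Lemma dIJ_ratio i j : dIJ E mu i j = c j / w i.
Proof.
have [pt path_pt] := (walks_from connected i).2 j.
have [pt0 shortest] :=
  ex_minimal (P := fun pt => pathIJ E i j pt) (fun pt => size pt.2) (ex_intro _ pt path_pt).
have ex_shortest : exists pt, shortest_pathIJ E i j pt by exists pt0.
exact: gainIJ_ratio (epsilon_spec _ _ ex_shortest).1.
Qed.

Lemma dII_ratio i l : dII E mu i l = w l / w i.
Proof.
rewrite /dII; case: eqP => [->|_]; first by rewrite divff.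
have [t walk_t] := (walks_from connected i).1 l.
have [t0 shortest] :=
  ex_minimal (P := fun t => walkII E i t l) size (ex_intro _ t walk_t).
have ex_shortest : exists t, shortest_pathII E i l t by exists t0.
exact: gainII_ratio (epsilon_spec _ _ ex_shortest).1.
Qed.

End Gains.

Section Incidence.
Variables (R : realType) (I J : nat) (E : 'I_I -> 'I_J -> bool).
Variable mu : 'I_I -> 'I_J -> R.
Hypothesis mu_pos : forall l j, E l j -> 0 < mu l j.
Hypothesis connected : forall u v, connect (adj E) u v.

Definition edges := [set e : 'I_I * 'I_J | E e.1 e.2].
Definition edge (k : 'I_#|edges|) : 'I_I * 'I_J := enum_val k.

Hypothesis edge_count : #|edges| = (I + J).-1%N.
Variable i0 : 'I_I.

Lemma edgeP k : E (edge k).1 (edge k).2.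
Proof. by have := enum_valP k; rewrite inE. Qed.

(* The row of the edge l ~ j carries mu_lj in column l and 1 in column j:
   it encodes both the class constraint and the pool constraint. *)
Definition incidence : 'M[R]_(#|edges|, I + J) :=
  row_mx (\matrix_(k, l) (if (edge k).1 == l then mu l (edge k).2 else 0))
         (\matrix_(k, j) (if (edge k).2 == j then 1 else 0)).

(* Potentials in vector form: mu_lj u_l + u_j = 0 on every edge; these are
   the vectors of the left kernel of the transposed incidence matrix. *)
Definition edge_potential (u : 'rV[R]_(I + J)) : Prop :=
  forall l j, E l j -> mu l j * u 0 (lshift J l) + u 0 (rshift I j) = 0.

Lemma edge_potential_of_kernel u : u *m incidence^T = 0 -> edge_potential u.
Proof.
move=> u_ker l j E_lj; have lj_edge : (l, j) \in edges by rewrite inE.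
pose k := enum_rank_in lj_edge (l, j).
have edge_k : edge k = (l, j) by rewrite /edge enum_rankK_in.
have := congr1 (fun M : 'M[R]_(1, #|edges|) => M 0 k) u_ker.
rewrite !mxE big_split_ord /=.
under eq_bigr do rewrite mxE row_mxEl mxE edge_k /= fun_if mulr0.
under [X in _ + X = _]eq_bigr do rewrite mxE row_mxEr mxE edge_k /= fun_if mulr0 mulr1.
by rewrite !sum_if_eq mulrC.
Qed.

Lemma edge_potential_zero u : edge_potential u -> u 0 (lshift J i0) = 0 -> u = 0.
Proof.
move=> u_pot u_i0.
pose value (v : vertex I J) := match v with
  | inl l => u 0 (lshift J l) | inr j => u 0 (rshift I j) end.
have zero v : value v = 0.
  apply: (connect_ind (P := fun v => value v = 0) _ (connected (inl i0) v)) => //.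
  case=> [l|j] [l'|j'] //= E_v.
    by have := u_pot _ _ E_v; move=> pot_eq value0; rewrite value0 mulr0 add0r in pot_eq.
  move=> value0; have := u_pot _ _ E_v; rewrite value0 addr0 => /eqP.
  by rewrite mulf_eq0 (gt_eqF (mu_pos E_v)) => /eqP.
apply/rowP => v; rewrite mxE.
by case: (split_ordP v) => [l ->|j ->]; [exact: (zero (inl l)) | exact: (zero (inr j))].
Qed.

(* Evaluation at i0 is injective on the potentials, so they form a space of
   dimension at most one. *)
Lemma left_kernel_rank : (\rank (kermx incidence^T) <= 1)%N.
Proof.
set K := row_base (kermx incidence^T).
pose at_i0 := col (lshift J i0) K.
have K_ker : K *m incidence^T = 0 by apply/sub_kermxP; rewrite eq_row_base.
have ker_K : kermx at_i0 *m K = 0.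
  apply/row_matrixP => a; rewrite row0; apply: edge_potential_zero.
    by apply: edge_potential_of_kernel; rewrite -row_mul -mulmxA K_ker mulmx0 row0.
  have := congr1 (fun M : 'M[R]_(_, 1) => M a 0) (mulmx_ker at_i0).
  by rewrite /at_i0 colE mulmxA -colE !mxE.
have ker0 : kermx at_i0 = 0.
  by apply: (row_free_inj (row_base_free _)); rewrite /= ker_K mul0mx.
have := mxrank_ker at_i0; rewrite ker0 mxrank0 => rank_eq.
by have := rank_leq_col at_i0; lia.
Qed.

Lemma incidence_rank : \rank incidence = (I + J).-1.
Proof.
have := left_kernel_rank; rewrite mxrank_ker mxrank_tr => ker_le1.
have : (\rank incidence <= (I + J).-1)%N.
  by apply: leq_trans (rank_leq_row incidence) _; rewrite edge_count.
have I_pos : (0 < I)%N := leq_ltn_trans (leq0n i0) (ltn_ord i0).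
lia.
Qed.

(* Normalizing a nonzero potential at i0 makes it positive along the tree. *)
Lemma exists_positive_potential :
  exists (w : 'I_I -> R) (c : 'I_J -> R), positive_potential E mu w c.
Proof.
set K := kermx incidence^T.
have K_neq0 : K != 0.
  rewrite -mxrank_eq0 /K mxrank_ker mxrank_tr incidence_rank.
  have I_pos : (0 < I)%N := leq_ltn_trans (leq0n i0) (ltn_ord i0).
  apply/eqP; lia.
have /existsP [a /existsP [v Kav]] : [exists a, exists v, K a v != 0].
  apply: contraR K_neq0 => /existsPn none; apply/eqP/matrixP => a v; rewrite [RHS]mxE.
  by have /existsPn/(_ v)/negPn/eqP := none a.
set u := row a K.
have u_pot : edge_potential u.
  by apply: edge_potential_of_kernel; rewrite -row_mul mulmx_ker row0.
have u_i0 : u 0 (lshift J i0) != 0.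
  apply: contra_neq Kav => u_i0; have -> : K a v = u 0 v by rewrite [RHS]mxE.
  by rewrite (edge_potential_zero u_pot u_i0) mxE.
pose w l := u 0 (lshift J l) / u 0 (lshift J i0).
pose c j := - u 0 (rshift I j) / u 0 (lshift J i0).
have wmu l j : E l j -> w l * mu l j = c j.
  move=> E_lj; have u_j : u 0 (rshift I j) = - (mu l j * u 0 (lshift J l)).
    by apply/eqP; rewrite -addr_eq0 addrC u_pot.
  by rewrite /w /c u_j; field.
pose positive x := match x with inl l => 0 < w l | inr j => 0 < c j end.
have pos x : positive x.
  apply: (connect_ind (P := positive) _ (connected (inl i0) x)); last by rewrite /= /w divff.
  case=> [l|j] [l'|j'] //= E_v; rewrite -(wmu _ _ E_v).
    by move=> w_pos; rewrite mulr_gt0 ?mu_pos.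
  by rewrite pmulr_lgt0 // mu_pos.
by exists w, c; split=> [l|j|]; [exact: (pos (inl l)) | exact: (pos (inr j)) | exact: wmu].
Qed.

(* Targets (b, theta) balanced against a positive potential, i.e. with
   sum_l w_l b_l = sum_j c_j theta_j, lie in the row space of the incidence
   matrix: both spaces are the kernel of the column (w, -c). *)
Lemma balanced_in_rowspace w c (b : 'I_I -> R) (th : 'I_J -> R) :
  positive_potential E mu w c ->
  \sum_(l < I) w l * b l = \sum_(j < J) c j * th j ->
  (row_mx (\row_l b l) (\row_j th j) <= incidence)%MS.
Proof.
case=> w_pos _ wmu balanced.
pose x : 'cV[R]_(I + J) := col_mx (\col_l w l) (\col_j - c j).
have incidence_x : incidence *m x = 0.
  rewrite mul_row_col; apply/matrixP => k z; rewrite !mxE.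
  under eq_bigr => l _ do rewrite !mxE (fun_if (fun y => y * w l)) mul0r.
  under [X in _ + X = _]eq_bigr => j _ do rewrite !mxE (fun_if (fun y => y * - c j)) mul0r.
  by rewrite !sum_if_eq mul1r -(wmu _ _ (edgeP k)) mulrC subrr.
have x_rank : \rank x = 1%N.
  apply/eqP; rewrite eqn_leq rank_leq_col lt0n mxrank_eq0.
  apply/eqP => /matrixP/(_ (lshift J i0) 0); rewrite col_mxEu !mxE => w0.
  by have := w_pos i0; rewrite w0 ltxx.
have ker_x : (kermx x <= incidence)%MS.
  have sub : (incidence <= kermx x)%MS by apply/sub_kermxP.
  have := (mxrank_leqif_sup sub).2.
  by rewrite mxrank_ker x_rank subn1 incidence_rank eqxx => <-.
apply: submx_trans ker_x; apply/sub_kermxP.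
rewrite mul_row_col; apply/matrixP => ? ?; rewrite !mxE.
under eq_bigr do rewrite !mxE mulrC.
under [X in _ + X = _]eq_bigr do rewrite !mxE mulrN mulrC.
by rewrite sumrN balanced subrr.
Qed.

Definition flow_of (D : 'rV[R]_#|edges|) (l : 'I_I) (j : 'I_J) : R :=
  \sum_(k | edge k == (l, j)) D 0 k.

Lemma flow_of_in_RG D : in_RG E (flow_of D).
Proof.
move=> l j not_E; rewrite /flow_of big1 // => k /eqP edge_k.
by have := edgeP k; rewrite edge_k /= (negbTE not_E).
Qed.

Lemma flow_of_restrict D l j (a : R) :
  (if E l j then a * flow_of D l j else 0) =
  \sum_k (if edge k == (l, j) then a * D 0 k else 0).
Proof.
rewrite /flow_of big_distrr big_mkcond /=; case: ifP => // not_E.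
by rewrite big1 // => k _; case: eqP => // edge_k; have := edgeP k; rewrite edge_k /= not_E.
Qed.

Lemma flow_of_class_sum D l :
  \sum_(j < J | E l j) mu l j * flow_of D l j = (D *m incidence) 0 (lshift J l).
Proof.
rewrite mul_mx_row row_mxEl mxE big_mkcond /=.
under eq_bigr do rewrite flow_of_restrict.
rewrite exchange_big /=; apply: eq_bigr => k _; rewrite mxE.
case: (edge k) => l' j'; case: (eqVneq l' l) => [->|ne_l].
  under eq_bigr do rewrite xpair_eqE eqxx /=.
  by rewrite sum_if_eq mulrC.
by rewrite big1 ?mulr0 // => j _; rewrite xpair_eqE (negbTE ne_l).
Qed.

Lemma flow_of_pool_sum D j :
  \sum_(l < I | E l j) flow_of D l j = (D *m incidence) 0 (rshift I j).
Proof.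
rewrite mul_mx_row row_mxEr mxE big_mkcond /=.
under eq_bigr do rewrite -[flow_of D _ _]mul1r flow_of_restrict.
rewrite exchange_big /=; apply: eq_bigr => k _; rewrite mxE.
case: (edge k) => l' j'; case: (eqVneq j' j) => [->|ne_j].
  under eq_bigr do rewrite xpair_eqE eqxx andbT.
  by rewrite sum_if_eq mul1r mulr1.
by rewrite mulr0 big1 // => l _; rewrite xpair_eqE (negbTE ne_j) andbF.
Qed.

Lemma flow_surjective w c (b : 'I_I -> R) (th : 'I_J -> R) :
  positive_potential E mu w c ->
  \sum_(l < I) w l * b l = \sum_(j < J) c j * th j ->
  exists kappa, [/\ in_RG E kappa,
    forall l, \sum_(j < J | E l j) mu l j * kappa l j = b l &
    forall j, \sum_(l < I | E l j) kappa l j = th j].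
Proof.
move=> potential balanced.
have /submxP [D target] := balanced_in_rowspace potential balanced.
exists (flow_of D); split; first exact: flow_of_in_RG.
  by move=> l; rewrite flow_of_class_sum -target row_mxEl mxE.
by move=> j; rewrite flow_of_pool_sum -target row_mxEr mxE.
Qed.
End Incidence.

Section SWSSProgram.
Variables (R : realType) (I J : nat) (E : 'I_I -> 'I_J -> bool).
Variables (mu : 'I_I -> 'I_J -> R) (nu : 'I_J -> R).
Variables (lamhat : 'I_I -> R) (muhat : 'I_I -> 'I_J -> R) (nuhat : 'I_J -> R).
Variables (xi_star : 'I_I -> 'I_J -> R) (p : 'I_I -> R).
Variables (w : 'I_I -> R) (c : 'I_J -> R).
Hypothesis potential : positive_potential E mu w c.
Hypothesis p_pos : forall l, 0 < p l.
Hypothesis I_pos : (0 < I)%N.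

Local Notation th := (theta E mu nu muhat nuhat xi_star).

Definition swss_bound : R :=
  (\sum_(j < J) c j * th j - \sum_(l < I) w l * lamhat l) / \sum_(l < I) w l * p l.

Lemma weighted_p_gt0 : 0 < \sum_(l < I) w l * p l.
Proof.
have [w_pos _ _] := potential.
rewrite (bigD1 (Ordinal I_pos)) //=; apply: ltr_pwDl; first by rewrite mulr_gt0.
by rewrite sumr_ge0 // => l _; rewrite mulr_ge0 // ltW.
Qed.

Lemma weighted_class_sums (kappa : 'I_I -> 'I_J -> R) :
  \sum_(l < I) w l * (\sum_(j < J | E l j) mu l j * kappa l j) =
  \sum_(j < J) c j * (\sum_(l < I | E l j) kappa l j).
Proof.
have [_ _ wmu] := potential.
under eq_bigr do rewrite big_distrr big_mkcond /=.
rewrite exchange_big /=; apply: eq_bigr => j _.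
rewrite big_distrr [RHS]big_mkcond /=; apply: eq_bigr => l _.
by case: ifP => // E_lj; rewrite -(wmu _ _ E_lj) mulrA.
Qed.

(* Weak duality: summing the class constraints with weights w bounds every
   feasible value by swss_bound. *)
Lemma swss_upper_bound v kappa :
  swss_feasible E mu nu lamhat muhat nuhat xi_star p v kappa -> v <= swss_bound.
Proof.
case=> _ [class_le pool_eq]; have [w_pos _ _] := potential.
have budget : \sum_(l < I) w l * (\sum_(j < J | E l j) mu l j * kappa l j - v * p l) =
    \sum_(j < J) c j * th j - v * \sum_(l < I) w l * p l.
  under eq_bigr do rewrite mulrBr.
  rewrite sumrB weighted_class_sums big_distrr /=.
  congr (_ - _); first by apply: eq_bigr => j _; rewrite pool_eq.
  by apply: eq_bigr => l _; rewrite mulrCA.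
have : \sum_(l < I) w l * lamhat l <=
    \sum_(l < I) w l * (\sum_(j < J | E l j) mu l j * kappa l j - v * p l).
  by apply: ler_sum => l _; rewrite ler_pM2l ?class_le.
by rewrite budget /swss_bound ler_pdivlMr ?weighted_p_gt0 //; lra.
Qed.

Hypothesis mu_pos : forall l j, E l j -> 0 < mu l j.
Hypothesis connected : forall u v, connect (adj E) u v.
Hypothesis edge_count : #|[set e : 'I_I * 'I_J | E e.1 e.2]| = (I + J).-1%N.

(* The bound is attained: the targets lamhat + swss_bound * p are balanced,
   hence realized by a flow, which saturates every class constraint. *)
Lemma swss_bound_feasible :
  exists kappa, swss_feasible E mu nu lamhat muhat nuhat xi_star p swss_bound kappa.
Proof.
pose b l := lamhat l + swss_bound * p l.
have balanced : \sum_(l < I) w l * b l = \sum_(j < J) c j * th j.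
  under eq_bigr do rewrite mulrDr mulrCA.
  rewrite big_split /= -big_distrr /= /swss_bound.
  by field; rewrite gt_eqF ?weighted_p_gt0.
have [kappa [RG class_eq pool_eq]] :=
  flow_surjective mu_pos connected edge_count (Ordinal I_pos) potential balanced.
exists kappa; split=> //; split=> // l.
by rewrite class_eq /b addrK.
Qed.

Lemma swss_value_potential :
  is_swss_value E mu nu lamhat muhat nuhat xi_star p swss_bound.
Proof. by split; [exact: swss_bound_feasible | exact: swss_upper_bound]. Qed.

Lemma gain_formula i :
  (\sum_(j < J) dIJ E mu i j * th j - \sum_(l < I) dII E mu i l * lamhat l)
    / (\sum_(l < I) dII E mu i l * p l) = swss_bound.
Proof.
have [w_pos _ _] := potential.
rewrite (eq_bigr (fun j => c j * th j / w i)) => [|j _]; last first.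
  by rewrite (dIJ_ratio potential connected) mulrAC.
rewrite [X in _ - X](eq_bigr (fun l => w l * lamhat l / w i)) => [|l _]; last first.
  by rewrite (dII_ratio potential connected) mulrAC.
rewrite [X in _ / X](eq_bigr (fun l => w l * p l / w i)) => [|l _]; last first.
  by rewrite (dII_ratio potential connected) mulrAC.
rewrite -!big_distrl /= /swss_bound.
by field; rewrite !gt_eqF ?weighted_p_gt0.
Qed.

End SWSSProgram.

Unset Implicit Arguments.

Theorem theorem2 (R : realType) (I J : nat) (E : 'I_I -> 'I_J -> bool)
  (mu : 'I_I -> 'I_J -> R) (nu : 'I_J -> R) (lam : 'I_I -> R)
  (lamhat : 'I_I -> R) (muhat : 'I_I -> 'I_J -> R) (nuhat : 'I_J -> R)
  (xi_star : 'I_I -> 'I_J -> R) :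
  (0 < I)%N -> (0 < J)%N ->
  is_tree E ->
  (forall i, 0 < lam i) -> (forall j, 0 < nu j) ->
  (forall i j, E i j -> 0 < mu i j) ->
  CRP E mu nu lam xi_star ->
  forall p : 'I_I -> R,
    (forall i, 0 < p i) -> \sum_(i < I) p i = 1 ->
    forall i : 'I_I,
      is_swss_value E mu nu lamhat muhat nuhat xi_star p
        ((\sum_(j < J) dIJ E mu i j * theta E mu nu muhat nuhat xi_star j
          - \sum_(l < I) dII E mu i l * lamhat l)
         / (\sum_(l < I) dII E mu i l * p l)).
Proof.
move=> I_pos _ [connected edge_count] _ _ mu_pos _ p p_pos _ i.
have [w [c potential]] := exists_positive_potential mu_pos connected edge_count i.
rewrite (gain_formula nu lamhat muhat nuhat xi_star potential p_pos I_pos connected i).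
exact: swss_value_potential.
Qed.
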